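(* For every $n \in \mathbb{N}$, the $n^\text{th}$ Jones--Wenzl projector $\mathrm{j}_n \in \mathrm{End}_{\mathcal{TL}_0(\Bbbk)}([n])$ is idempotent: $\mathrm{j}_n^{2} = \mathrm{j}_n$.
   Context: Let $\Bbbk$ be a field and let $\mathcal{TL}_0(\Bbbk)$ be the strict $\Bbbk$-linear monoidal category with objects $[0],[1],[2],\ldots$ (where $[m]\otimes[n]=[m+n]$), whose morphisms are generated by $\mathrm{cup}\colon[0]\to[2]$ and $\mathrm{cap}\colon[2]\to[0]$ subject to the relations: the circle $\mathrm{cap}\circ\mathrm{cup}$ equals $\mathrm{id}_{[0]}$, and both zig-zags $(\mathrm{id}_{[1]}\otimes\mathrm{cap})\circ(\mathrm{cup}\otimes\mathrm{id}_{[1]})$ and $(\mathrm{cap}\otimes\mathrm{id}_{[1]})\circ(\mathrm{id}_{[1]}\otimes\mathrm{cup})$ equal $0$ (this is the $q=0$ specialization of the renormalized Temperley--Lieb category in which the zig-zag equals $q\cdot\mathrm{id}_{[1]}$ and the circle equals $(q^2+1)\mathrm{id}_{[0]}$). A subset $I\subseteq\{1,\ldots,n\}$ is called apt if $n\notin I$ and $i\in I$ implies $i-1,i+1\notin I$. For an apt $I$, $\mathrm{cap}_{I,n}$ denotes the cap diagram from $[n]$ consisting of caps joining positions $(i,i+1)$ for $i\in I$ (and through-strands elsewhere), $\mathrm{cup}_{I,n}$ is the corresponding cup diagram obtained by reflecting it, and $c_{I,n}=\mathrm{cup}_{I,n}\circ\mathrm{cap}_{I,n}\in\mathrm{End}_{\mathcal{TL}_0(\Bbbk)}([n])$.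 The $n^\text{th}$ Jones--Wenzl projector is defined as $\mathrm{j}_n=\sum_{I\subseteq\{1,\ldots,n\}\text{ apt}}(-1)^{|I|}c_{I,n}$. *)

From HB Require Import structures.
From mathcomp Require Import all_boot all_order all_algebra.
Set Implicit Arguments. Unset Strict Implicit. Unset Printing Implicit Defensive.
Import GRing.Theory.
Local Open Scope ring_scope.

(* A strict K-linear monoidal category whose monoid of objects is (nat,+),
   object m standing for [m], equipped with morphisms cup : [0] -> [2] and
   cap : [2] -> [0].  (Data only; axioms below.) *)
Record PRO_ops (K : fieldType) := PROOps {
  hom  : nat -> nat -> lmodType K;
  mcomp : forall a b c, hom b c -> hom a b -> hom a c;
  idm  : forall a, hom a a;
  tens : forall a b c d, hom a b -> hom c d -> hom (a + c) (b + d);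
  cup  : hom 0 2;
  cap  : hom 2 0 }.

Arguments mcomp {K} C {a b c} : rename.
Arguments idm {K} C a : rename.
Arguments tens {K} C {a b c d} : rename.
Arguments cup {K} C : rename.
Arguments cap {K} C : rename.

Definition castH (K : fieldType) (C : PRO_ops K) (a b a' b' : nat)
    (ea : a = a') (eb : b = b') (f : hom C a b) : hom C a' b' :=
  match ea in _ = x return hom C x b' with
  | erefl => match eb in _ = y return hom C a y with erefl => f end end.

Record isTL0 (K : fieldType) (C : PRO_ops K) : Prop := IsTL0 {
  compA : forall a b c d (f : hom C c d) (g : hom C b c) (h : hom C a b),
      mcomp C f (mcomp C g h) = mcomp C (mcomp C f g) h;
  comp1f : forall a b (f : hom C a b), mcomp C (idm C b) f = f;
  compf1 : forall a b (f : hom C a b), mcomp C f (idm C a) = f;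
  compDl : forall a b c (f f' : hom C b c) (g : hom C a b),
      mcomp C (f + f') g = mcomp C f g + mcomp C f' g;
  compDr : forall a b c (f : hom C b c) (g g' : hom C a b),
      mcomp C f (g + g') = mcomp C f g + mcomp C f g';
  compZl : forall a b c (k : K) (f : hom C b c) (g : hom C a b),
      mcomp C (k *: f) g = k *: mcomp C f g;
  compZr : forall a b c (k : K) (f : hom C b c) (g : hom C a b),
      mcomp C f (k *: g) = k *: mcomp C f g;
  tens_comp : forall a b c a' b' c' (f : hom C b c) (g : hom C a b)
      (f' : hom C b' c') (g' : hom C a' b'),
      tens C (mcomp C f g) (mcomp C f' g') = mcomp C (tens C f f') (tens C g g');
  tens_id : forall a b, tens C (idm C a) (idm C b) = idm C (a + b);
  tensA : forall a b c d e g (f : hom C a b) (f' : hom C c d) (f'' : hom C e g),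
      tens C (tens C f f') f'' =
      castH (addnA a c e) (addnA b d g) (tens C f (tens C f' f''));
  tens0f : forall a b (f : hom C a b), tens C (idm C 0) f = f;
  tensf0 : forall a b (f : hom C a b),
      castH (addn0 a) (addn0 b) (tens C f (idm C 0)) = f;
  tensDl : forall a b c d (f f' : hom C a b) (g : hom C c d),
      tens C (f + f') g = tens C f g + tens C f' g;
  tensDr : forall a b c d (f : hom C a b) (g g' : hom C c d),
      tens C f (g + g') = tens C f g + tens C f g';
  tensZl : forall a b c d (k : K) (f : hom C a b) (g : hom C c d),
      tens C (k *: f) g = k *: tens C f g;
  tensZr : forall a b c d (k : K) (f : hom C a b) (g : hom C c d),
      tens C f (k *: g) = k *: tens C f g;
  (* Temperley--Lieb relations at q = 0 *)
  circle : mcomp C (cap C) (cup C) = idm C 0;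
  zigzag1 : mcomp C (tens C (idm C 1) (cap C)) (tens C (cup C) (idm C 1)) = 0;
  zigzag2 : mcomp C (tens C (cap C) (idm C 1)) (tens C (idm C 1) (cup C)) = 0 }.

(* Position p (1-based, 1 <= p <= n) belongs to I; element i : 'I_n of I
   encodes position i+1. *)
Definition inI (n : nat) (I : {set 'I_n}) (p : nat) : bool :=
  [exists i in I, i.+1 == p].

Definition apt (n : nat) (I : {set 'I_n}) : bool :=
  [forall i in I, [&& i.+1 != n, ~~ inI I i & ~~ inI I i.+2]].

(* Number of through-strands of the cap diagram cap_{P,n}, where P is the
   (1-based) set of left endpoints of caps. *)
Fixpoint tgtI (n : nat) (P : nat -> bool) : nat :=
  match n with
  | 0 => 0
  | S n' =>
    if P 1 then
      match n' with
      | 0 => 1 (* not reached for apt sets *)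
      | S n'' => tgtI n'' (fun p => P (p + 2))
      end
    else (tgtI n' (fun p => P (p + 1))).+1
  end.

Section Diagrams.
Variables (K : fieldType) (C : PRO_ops K).

(* cap_{P,n} : [n] -> [n - 2|P|] : caps joining (p,p+1) for p in P,
   through-strands elsewhere (built left to right). *)
Fixpoint capI (n : nat) (P : nat -> bool) : hom C n (tgtI n P) :=
  match n as n0 return hom C n0 (tgtI n0 P) with
  | 0 => idm C 0
  | S n' =>
    match P 1 as b return
      hom C n'.+1 (if b then match n' with
                             | 0 => 1
                             | S n'' => tgtI n'' (fun p => P (p + 2)) end
                   else (tgtI n' (fun p => P (p + 1))).+1) with
    | true =>
      match n' as n1 return
        hom C n1.+1 (match n1 with
                     | 0 => 1
                     | S n'' => tgtI n'' (fun p => P (p + 2)) end) with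
      | 0 => idm C 1
      | S n'' => tens C (cap C) (capI n'' (fun p => P (p + 2)))
      end
    | false => tens C (idm C 1) (capI n' (fun p => P (p + 1)))
    end
  end.

Fixpoint cupI (n : nat) (P : nat -> bool) : hom C (tgtI n P) n :=
  match n as n0 return hom C (tgtI n0 P) n0 with
  | 0 => idm C 0
  | S n' =>
    match P 1 as b return
      hom C (if b then match n' with
                       | 0 => 1
                       | S n'' => tgtI n'' (fun p => P (p + 2)) end
             else (tgtI n' (fun p => P (p + 1))).+1) n'.+1 with
    | true =>
      match n' as n1 return
        hom C (match n1 with
               | 0 => 1
               | S n'' => tgtI n'' (fun p => P (p + 2)) end) n1.+1 with
      | 0 => idm C 1
      | S n'' => tens C (cup C) (cupI n'' (fun p => P (p + 2)))
      end
    | false => tens C (idm C 1) (cupI n' (fun p => P (p + 1)))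
    end
  end.

Definition cI (n : nat) (I : {set 'I_n}) : hom C n n :=
  mcomp C (cupI n (inI I)) (capI n (inI I)).

Definition jw (n : nat) : hom C n n :=
  \sum_(I : {set 'I_n} | apt I) ((-1) ^+ #|I|) *: cI I.

End Diagrams.

(* Splitting the apt sets I of {1, ..., n+2} according to whether 1 \in I
   gives the three-term recursion
     j_0 = id, j_1 = id, j_{n+2} = id_1 (x) j_{n+1} - U (x) j_n,  U = cup o cap.
   In TL_0 the circle relation makes U idempotent and the zig-zag relations
   give (U (x) id_1)(id_1 (x) U) = (id_1 (x) U)(U (x) id_1) = 0.  Expanding the
   recursion twice then shows j_{n+2} (U (x) id_n) = 0 and, when j_n is
   idempotent, (U (x) j_n)(id_1 (x) j_{n+1}) = U (x) j_n; idempotency of all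
   the j_n follows by induction on n. *)

From Pilot Require Import Defs.
From HB Require Import structures.
From mathcomp Require Import all_boot all_order all_algebra.
From Stdlib Require Import FunctionalExtensionality.
Set Implicit Arguments. Unset Strict Implicit. Unset Printing Implicit Defensive.

Import GRing.Theory.

(* With element i : 'I_n encoding position i+1 (see inI), shiftI J is J + 1
   and capconsI J is {1} \cup (J + 2). *)
Definition shiftI n (J : {set 'I_n}) : {set 'I_n.+1} := lift ord0 @: J.
Definition unshiftI n (I : {set 'I_n.+1}) : {set 'I_n} := [set j | lift ord0 j \in I].
Definition capconsI n (J : {set 'I_n}) : {set 'I_n.+2} := ord0 |: shiftI (shiftI J).
Definition uncapconsI n (I : {set 'I_n.+2}) : {set 'I_n} := unshiftI (unshiftI I).

Lemma mem_shiftI n (J : {set 'I_n}) j : (lift ord0 j \in shiftI J) = (j \in J).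
Proof. exact/mem_imset/lift_inj. Qed.

Lemma ord0_shiftI n (J : {set 'I_n}) : ord0 \notin shiftI J.
Proof. by apply/imsetP=> -[j _ /eqP]; rewrite (negbTE (neq_lift _ _)). Qed.

Lemma card_shiftI n (J : {set 'I_n}) : #|shiftI J| = #|J|.
Proof. exact/card_imset/lift_inj. Qed.

Lemma shiftIK n : cancel (@shiftI n) (@unshiftI n).
Proof. by move=> J; apply/setP=> j; rewrite inE mem_shiftI. Qed.

Lemma shiftI_unshiftI n (I : {set 'I_n.+1}) : shiftI (unshiftI I) = I :\ ord0.
Proof.
apply/setP=> i; rewrite in_setD1; case: (unliftP ord0 i) => [j ->|->].
  by rewrite mem_shiftI inE eq_sym (negbTE (neq_lift _ _)).
by rewrite eqxx (negbTE (ord0_shiftI _)).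
Qed.

Lemma unshiftI_capconsI n (J : {set 'I_n}) : unshiftI (capconsI J) = shiftI J.
Proof.
apply/setP=> j; rewrite inE in_setU1 mem_shiftI.
by rewrite eq_sym (negbTE (neq_lift _ _)).
Qed.

Lemma capconsIK n : cancel (@capconsI n) (@uncapconsI n).
Proof. by move=> J; rewrite /uncapconsI unshiftI_capconsI shiftIK. Qed.

Lemma card_capconsI n (J : {set 'I_n}) : #|capconsI J| = #|J|.+1.
Proof. by rewrite cardsU1 (ord0_shiftI _) !card_shiftI. Qed.

Lemma unshiftIK n (I : {set 'I_n.+1}) :
  ord0 \notin I -> shiftI (unshiftI I) = I.
Proof.
move=> I0; apply/setP=> i; rewrite shiftI_unshiftI in_setD1.
by case: eqP => // ->; apply/esym/negbTE.
Qed.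

Lemma uncapconsIK n (I : {set 'I_n.+2}) :
  ord0 \in I -> lift ord0 ord0 \notin I -> capconsI (uncapconsI I) = I.
Proof.
move=> I0 I1; rewrite /capconsI /uncapconsI.
by rewrite unshiftIK ?shiftI_unshiftI ?setD1K // inE.
Qed.

Lemma inI_mem n (A : {set 'I_n}) (i : 'I_n) : inI A i.+1 = (i \in A).
Proof.
apply/existsP/idP => [[j /andP[jA /eqP [ji]]] | iA]; last by exists i; rewrite iA /=.
by rewrite -(val_inj ji).
Qed.

Lemma inI0 n (A : {set 'I_n}) : inI A 0 = false.
Proof. by apply/existsP=> -[i /andP[]]. Qed.

Lemma inISS n (A : {set 'I_n.+1}) p : inI A p.+2 = inI (unshiftI A) p.+1.
Proof.
apply/existsP/existsP => [[i /andP[iA /eqP]] | [j /andP[]]].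
  case: (unliftP ord0 i) iA => [j -> jA|-> //]; rewrite lift0 => -[<-].
  by exists j; rewrite inE jA /=.
by rewrite inE => jA /eqP[<-]; exists (lift ord0 j); rewrite jA lift0 /=.
Qed.

Lemma inI_shiftI n (J : {set 'I_n}) p : inI (shiftI J) p.+1 = inI J p.
Proof.
case: p => [|p]; last by rewrite inISS shiftIK.
by rewrite (inI_mem _ ord0) (negbTE (ord0_shiftI J)) inI0.
Qed.

Lemma inI_capconsI1 n (J : {set 'I_n}) : inI (capconsI J) 1.
Proof. by rewrite (inI_mem _ ord0) setU11. Qed.

Lemma inI_capconsI n (J : {set 'I_n}) p : inI (capconsI J) p.+2 = inI J p.
Proof. by rewrite inISS unshiftI_capconsI inI_shiftI. Qed.

Definition is_apt (n : nat) (Q : nat -> bool) :=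
  forall p, Q p -> [/\ p != n, ~~ Q p.-1 & ~~ Q p.+1].

Lemma aptP n (A : {set 'I_n}) : reflect (is_apt n (inI A)) (apt A).
Proof.
apply: (iffP forallP) => [H p Ap | H i].
  have [i /andP[iA /eqP <-]] := existsP Ap.
  by have /implyP/(_ iA)/and3P := H i.
by apply/implyP => iA; have [-> /= -> ->] := H _ (etrans (inI_mem A i) iA).
Qed.

Lemma is_apt_shift n (Q Q' : nat -> bool) :
  Q 0 = false -> Q' 0 = false -> (forall p, Q' p.+1 = Q p) ->
  is_apt n.+1 Q' <-> is_apt n Q.
Proof.
move=> Q0 Q'0 Q'S; split=> H p Qp.
  have [] := H p.+1; rewrite Q'S //.
  by case: p {Qp} => [|p] /=; rewrite ?Q'S ?Q0 => *; split.
case: p Qp => [|p]; rewrite ?Q'0 // Q'S => Qp.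
have [] := H p Qp.
by case: p {Qp} => [|p] /=; rewrite ?Q'S ?Q'0 => *; split.
Qed.

Lemma is_apt_capcons n (Q Q' : nat -> bool) :
  Q 0 = false -> Q' 0 = false -> Q' 1 -> (forall p, Q' p.+2 = Q p) ->
  is_apt n.+2 Q' <-> is_apt n Q.
Proof.
move=> Q0 Q'0 Q'1 Q'SS; split=> H p Qp.
  case: p Qp => [|p]; rewrite ?Q0 // => Qp.
  by have [] := H p.+3; rewrite /= !Q'SS // => *; split.
case: p Qp => [|[|p]]; rewrite ?Q'0 // ?Q'SS => Qp.
  by split; rewrite ?Q'0 ?Q'SS ?Q0.
have [] := H p Qp.
by case: p Qp => [|p] /=; rewrite ?Q0 // !Q'SS => *; split.
Qed.

Lemma apt_shiftI n (J : {set 'I_n}) : apt (shiftI J) = apt J.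
Proof.
have E := is_apt_shift n (inI0 J) (inI0 (shiftI J)) (inI_shiftI J).
by apply/aptP/aptP => /E.
Qed.

Lemma apt_capconsI n (J : {set 'I_n}) : apt (capconsI J) = apt J.
Proof.
have E := is_apt_capcons n (inI0 J) (inI0 (capconsI J)) (inI_capconsI1 J) (inI_capconsI J).
by apply/aptP/aptP => /E.
Qed.

Lemma apt_ord0_adj n (I : {set 'I_n.+2}) :
  apt I -> ord0 \in I -> lift ord0 ord0 \notin I.
Proof.
move=> /aptP aptI I0; rewrite -(inI_mem I) /=.
by have [] := aptI 1; rewrite ?(inI_mem I ord0).
Qed.

Lemma apt_le1 n (I : {set 'I_n}) : n <= 1 -> apt I = (I == set0).
Proof.
move=> n_le1; case: (set_0Vmem I) => [->|[i iI]].
  by rewrite eqxx; apply/forallP => i; rewrite in_set0.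
have /negbTE-> : I != set0 by apply/set0Pn; exists i.
apply/forallP => /(_ i); rewrite iI /= => /andP[/negP[]].
by rewrite eqn_leq ltn_ord (leq_trans n_le1).
Qed.

Local Open Scope ring_scope.

Section TL0.
Variables (K : fieldType) (C : PRO_ops K).
Hypothesis HC : isTL0 C.

Local Notation hom := (Defs.hom C).
Local Notation id := (idm C).
Local Notation "f \c g" := (mcomp C f g) (at level 40, left associativity).
Local Notation "f ⊗ g" := (tens C f g) (at level 40, left associativity).

Lemma castH_id a b (ea : a = a) (eb : b = b) (f : hom a b) : castH ea eb f = f.
Proof. by rewrite (eq_irrelevance ea erefl) (eq_irrelevance eb erefl). Qed.

Lemma mcomp0l a b c (g : hom a b) : (0 : hom b c) \c g = 0.
Proof. by rewrite -(scale0r (0 : hom b c)) (compZl HC) scale0r. Qed.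

Lemma mcomp0r a b c (f : hom b c) : f \c (0 : hom a b) = 0.
Proof. by rewrite -(scale0r (0 : hom a b)) (compZr HC) scale0r. Qed.

Lemma mcompBl a b c (f f' : hom b c) (g : hom a b) : (f - f') \c g = f \c g - f' \c g.
Proof. by rewrite (compDl HC) -scaleN1r (compZl HC) scaleN1r. Qed.

Lemma mcompBr a b c (f : hom b c) (g g' : hom a b) : f \c (g - g') = f \c g - f \c g'.
Proof. by rewrite (compDr HC) -scaleN1r (compZr HC) scaleN1r. Qed.

Lemma tens0l a b c d (g : hom c d) : (0 : hom a b) ⊗ g = 0.
Proof. by rewrite -(scale0r (0 : hom a b)) (tensZl HC) scale0r. Qed.

Lemma tens0r a b c d (f : hom a b) : f ⊗ (0 : hom c d) = 0.
Proof. by rewrite -(scale0r (0 : hom c d)) (tensZr HC) scale0r. Qed.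

Lemma tensBr a b c d (f : hom a b) (g g' : hom c d) : f ⊗ (g - g') = f ⊗ g - f ⊗ g'.
Proof. by rewrite (tensDr HC) -scaleN1r (tensZr HC) scaleN1r. Qed.

Lemma tens_sumr a b c d (f : hom a b) (I : finType) (P : pred I) (F : I -> hom c d) :
  f ⊗ (\sum_(i | P i) F i) = \sum_(i | P i) f ⊗ F i.
Proof. exact: (big_morph _ (tensDr HC f) (tens0r _ _ f)). Qed.

Lemma tens_idS n : id n.+1 = id 1 ⊗ id n.
Proof. by rewrite (tens_id HC). Qed.

Lemma tens_compl a b c d (f : hom a b) (g : hom c d) :
  f ⊗ g = (f ⊗ id d) \c (id a ⊗ g).
Proof. by rewrite -(tens_comp HC) (compf1 HC) (comp1f HC). Qed.

Lemma tens_compr a b c d (f : hom a b) (g : hom c d) :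
  f ⊗ g = (id b ⊗ g) \c (f ⊗ id c).
Proof. by rewrite -(tens_comp HC) (compf1 HC) (comp1f HC). Qed.

(* For numeral objects the two sides of tensA have convertible types. *)
Lemma tensA_11 a b (x y : hom 1 1) (f : hom a b) : x ⊗ (y ⊗ f) = (x ⊗ y) ⊗ f.
Proof. by rewrite (tensA HC) castH_id. Qed.

Lemma tensA_12 a b (x : hom 1 1) (y : hom 2 2) (f : hom a b) :
  x ⊗ (y ⊗ f) = (x ⊗ y) ⊗ f.
Proof. by rewrite (tensA HC) castH_id. Qed.

Lemma tensA_21 a b (x : hom 2 2) (y : hom 1 1) (f : hom a b) :
  x ⊗ (y ⊗ f) = (x ⊗ y) ⊗ f.
Proof. by rewrite (tensA HC) castH_id. Qed.

Definition cupcap : hom 2 2 := cup C \c cap C.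

Lemma cupcap_idem : cupcap \c cupcap = cupcap.
Proof.
by rewrite /cupcap (Defs.compA HC) -[_ \c cup C](Defs.compA HC) (circle HC) (compf1 HC).
Qed.

Lemma cupcap_tens_id : cupcap ⊗ id 1 = (cup C ⊗ id 1) \c (cap C ⊗ id 1).
Proof. by rewrite -(tens_comp HC) (comp1f HC). Qed.

Lemma id_tens_cupcap : id 1 ⊗ cupcap = (id 1 ⊗ cup C) \c (id 1 ⊗ cap C).
Proof. by rewrite -(tens_comp HC) (comp1f HC). Qed.

Lemma cupcap_zigzag1 : (id 1 ⊗ cupcap) \c (cupcap ⊗ id 1) = 0.
Proof.
rewrite cupcap_tens_id id_tens_cupcap -(Defs.compA HC).
by rewrite [(id 1 ⊗ cap C) \c _](Defs.compA HC) (zigzag1 HC) mcomp0l mcomp0r.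
Qed.

Lemma cupcap_zigzag2 : (cupcap ⊗ id 1) \c (id 1 ⊗ cupcap) = 0.
Proof.
rewrite cupcap_tens_id id_tens_cupcap -(Defs.compA HC).
by rewrite [(cap C ⊗ id 1) \c _](Defs.compA HC) (zigzag2 HC) mcomp0l mcomp0r.
Qed.

Section Recurrence.
Variable j : forall n, hom n n.
Hypotheses (j0 : j 0 = id 0) (j1 : j 1 = id 1).
Hypothesis jSS : forall n, j n.+2 = id 1 ⊗ j n.+1 - cupcap ⊗ j n.

Lemma jSS_cupcap n : j n.+2 \c (cupcap ⊗ id n) = 0.
Proof.
case: n => [|n].
  rewrite jSS j1 j0 mcompBl (tens_id HC) (comp1f HC).
  by rewrite -(tens_comp HC cupcap cupcap (id 0) (id 0)) cupcap_idem (comp1f HC) subrr.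
(* tens_comp is instantiated by hand: the middle objects occur as n.+3 etc.,
   which do not unify with a sum b + b'. *)
rewrite [j n.+3]jSS [j n.+2]jSS tensBr tensA_11 tensA_12 (tens_id HC) !mcompBl.
rewrite -(tens_comp HC (id 2) cupcap (j n.+1) (id n.+1)) (comp1f HC) (compf1 HC).
rewrite -(tens_comp HC cupcap cupcap (j n.+1) (id n.+1)) cupcap_idem (compf1 HC).
rewrite (tens_idS n) tensA_21.
rewrite -(tens_comp HC (id 1 ⊗ cupcap) (cupcap ⊗ id 1) (j n) (id n)).
by rewrite cupcap_zigzag1 tens0l subr0 subrr.
Qed.

Lemma cupcap_tens_j_comp n :
  j n \c j n = j n -> (cupcap ⊗ j n) \c (id 1 ⊗ j n.+1) = cupcap ⊗ j n.
Proof.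
case: n => [|n] j_idem; first by rewrite j1 (tens_id HC) (compf1 HC).
rewrite [j n.+2]jSS tensBr tensA_11 tensA_12 (tens_id HC) mcompBr.
rewrite -(tens_comp HC cupcap (id 2) (j n.+1) (j n.+1)) j_idem (compf1 HC).
rewrite {2}(tens_compr cupcap (j n.+1)) -(Defs.compA HC) (tens_idS n) tensA_21.
rewrite -(tens_comp HC (cupcap ⊗ id 1) (id 1 ⊗ cupcap) (id n) (j n)).
by rewrite cupcap_zigzag2 tens0l mcomp0r subr0.
Qed.

Lemma j_idem n : j n \c j n = j n.
Proof.
suff: j n \c j n = j n /\ j n.+1 \c j n.+1 = j n.+1 by case.
elim: n => [|n [IHn IHSn]]; first by rewrite j0 j1 !(comp1f HC).
split=> //; rewrite {2}[j n.+2]jSS mcompBr (tens_compl cupcap (j n)).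
rewrite (Defs.compA HC) jSS_cupcap mcomp0l subr0 {1}[j n.+2]jSS mcompBl.
rewrite -(tens_comp HC (id 1) (id 1) (j n.+1) (j n.+1)) IHSn (comp1f HC).
by rewrite cupcap_tens_j_comp.
Qed.

End Recurrence.

Definition cupcapI n (P : nat -> bool) : hom n n := cupI C n P \c capI C n P.

Lemma cupcapI_through n (P Q : nat -> bool) :
  P 1 = false -> (forall p, P p.+1 = Q p) -> cupcapI n.+1 P = id 1 ⊗ cupcapI n Q.
Proof.
move=> P1 PS; have -> : Q = (fun p => P (p + 1)).
  by apply: functional_extensionality => p; rewrite -PS -addn1.
by rewrite /cupcapI /= P1 -(tens_comp HC (id 1) (id 1)) (comp1f HC).
Qed.

Lemma cupcapI_cap n (P Q : nat -> bool) :
  P 1 -> (forall p, P p.+2 = Q p) -> cupcapI n.+2 P = cupcap ⊗ cupcapI n Q.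
Proof.
move=> P1 PSS; have -> : Q = (fun p => P (p + 2)).
  by apply: functional_extensionality => p; rewrite -PSS -addn2.
by rewrite /cupcapI /= P1 -(tens_comp HC (cup C) (cap C)).
Qed.

Lemma cI_shiftI n (J : {set 'I_n}) : cI C (shiftI J) = id 1 ⊗ cI C J.
Proof. by apply: cupcapI_through; [rewrite (inI_shiftI J 0) inI0 | apply: inI_shiftI]. Qed.

Lemma cI_capconsI n (J : {set 'I_n}) : cI C (capconsI J) = cupcap ⊗ cI C J.
Proof. exact: cupcapI_cap (inI_capconsI1 J) (inI_capconsI J). Qed.

Lemma jw_le1 n : (n <= 1)%N -> jw C n = cI C (set0 : {set 'I_n}).
Proof.
move=> n_le1; rewrite /jw (big_pred1 set0) ?cards0 ?scale1r // => I.
exact: apt_le1.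
Qed.

Lemma jw0 : jw C 0 = id 0.
Proof. by rewrite jw_le1 // /cI /= (comp1f HC). Qed.

Lemma jw1 : jw C 1 = id 1.
Proof.
rewrite jw_le1 // -(imset0 (@lift 1 ord0)) cI_shiftI.
by rewrite /cI /= (comp1f HC) (tens_id HC).
Qed.

Lemma jwSS n : jw C n.+2 = id 1 ⊗ jw C n.+1 - cupcap ⊗ jw C n.
Proof.
rewrite /jw (bigID (fun I : {set 'I_n.+2} => ord0 \in I)) /= addrC !tens_sumr -sumrN.
congr (_ + _).
  rewrite (reindex_onto (@shiftI _) (@unshiftI _)) => [|I /andP[_]]; last first.
    exact: unshiftIK.
  apply: eq_big => J; first by rewrite apt_shiftI ord0_shiftI shiftIK eqxx !andbT.
  by rewrite card_shiftI cI_shiftI (tensZr HC).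
rewrite (reindex_onto (@capconsI _) (@uncapconsI _)) => [|I /andP[aptI I0]]; last first.
  exact: uncapconsIK I0 (apt_ord0_adj aptI I0).
apply: eq_big => J; first by rewrite apt_capconsI setU11 capconsIK eqxx !andbT.
by rewrite card_capconsI cI_capconsI (tensZr HC) exprS mulN1r scaleNr.
Qed.

End TL0.

Theorem mainTheorem1 (K : fieldType) (C : PRO_ops K) (HC : isTL0 C) (n : nat) :
  mcomp C (jw C n) (jw C n) = jw C n.
Proof. exact: (j_idem HC (jw0 HC) (jw1 HC) (jwSS HC)). Qed.
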